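(* Let $M_0$ be a matroid on a finite set $E$ and let $\mathcal{C}_0$ be the family of all non-spanning circuits of $M_0$. Then the free elevation of $M_0$ is a maximal $\mathcal{C}_0$-matroid on $E$. That is, it is a $\mathcal{C}_0$-matroid, and no $\mathcal{C}_0$-matroid on $E$ is strictly larger in the weak order.
   Context: A $\mathcal{C}$-matroid on $E$ is a matroid on $E$ in which every member of $\mathcal{C}$ is a circuit. The weak order is defined by $M_1\preceq M_2$ if every independent set of $M_1$ is independent in $M_2$. $M$ is the truncation of $N$ if $r_N(E)=r_M(E)+1$ and $r_M(X)=\min\{r_N(X),r_M(E)\}$ for all $X$. An erection of $M$ is any such $N$, or $M$ itself (the trivial erection). The free erection is the maximum of the lattice of erections of $M$ under the weak order. The free elevation of $M_0$ is obtained by repeatedly taking non-trivial free erections until a matroid with no non-trivial erection is reached. *)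

(* A matroid on the finite ground set E = [set: T] (T a finType)
   is represented by its family of independent sets. *)
From mathcomp Require Import all_boot.
Set Implicit Arguments. Unset Strict Implicit. Unset Printing Implicit Defensive.

Section Matroids.
Variable T : finType.
Implicit Types (M N : {set {set T}}) (X Y C : {set T}).

Definition is_matroid M : Prop :=
  [/\ set0 \in M,
      (forall A B : {set T}, B \in M -> A \subset B -> A \in M) &
      (forall A B : {set T}, A \in M -> B \in M -> #|A| < #|B| ->
         exists2 x, x \in B :\: A & x |: A \in M)].

Definition rank M X : nat := \max_(Y in M | Y \subset X) #|Y|.

Definition circuit M C : bool :=
  (C \notin M) && [forall D : {set T}, (D \proper C) ==> (D \in M)].

Definition nonspanning_circuits M : {set {set T}} :=
  [set C | circuit M C && (rank M C < rank M [set: T])].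

Definition CC_matroid (CC : {set {set T}}) M : Prop :=
  is_matroid M /\ forall C, C \in CC -> circuit M C.

Definition weak_le M1 M2 : bool := M1 \subset M2.

Definition truncation_of M N : Prop :=
  rank N [set: T] = (rank M [set: T]).+1 /\
  forall X, rank M X = minn (rank N X) (rank M [set: T]).

Definition erection M N : Prop :=
  is_matroid N /\ (truncation_of M N \/ N = M).

Definition free_erection M N : Prop :=
  erection M N /\ forall N', erection M N' -> weak_le N' N.

Inductive free_elevation : {set {set T}} -> {set {set T}} -> Prop :=
| fel_stop M : is_matroid M -> (forall N, erection M N -> N = M) ->
    free_elevation M M
| fel_step M M1 N : free_erection M M1 -> M1 <> M -> free_elevation M1 N ->
    free_elevation M N.

End Matroids.

(* Let r be the rank of M0 and trunc k N the independent sets of N of size at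
   most k. Each elevation step M -> M1 is a truncation, so trunc r FE = M0.
   Moreover FE is maximal among the matroids N containing it with
   trunc r N = M0: if rank N <= r then N = trunc r N = M0, and otherwise
   trunc (r+1) N is a non-trivial erection of M0, so it lies below the free
   erection M1, hence equals it, and induction applies. A non-spanning
   circuit of M0 has at most r elements, hence stays a circuit of FE.
   Conversely, if a C0-matroid N contains FE, a set
   independent in N of size at most r but dependent in M0 would contain a
   circuit of M0 of rank below r, i.e. a member of C0, dependent in N; so
   trunc r N = M0 and N = FE. *)

From mathcomp Require Import all_boot.
From mathcomp Require Import zify.
Set Implicit Arguments. Unset Strict Implicit. Unset Printing Implicit Defensive.

Section Elevation.
Variable T : finType.
Implicit Types (M N : {set {set T}}) (X Y Z C : {set T}).

Lemma subset_of_card k Y :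
  k <= #|Y| -> exists2 Z : {set T}, Z \subset Y & #|Z| = k.
Proof.
case/card_geqP=> s [uniq_s <- sub_sY]; exists [set x in s].
  by apply/subsetP=> x; rewrite inE => /sub_sY.
by rewrite cardsE (card_uniqP uniq_s).
Qed.

Lemma rank_leq_card M X : rank M X <= #|X|.
Proof. by apply/bigmax_leqP=> Y /andP[_ sYX]; apply: subset_leq_card. Qed.

Lemma card_leq_rank M X Y : Y \in M -> Y \subset X -> #|Y| <= rank M X.
Proof. by move=> YM sYX; apply: (bigmax_sup Y) => //; rewrite YM sYX. Qed.

Lemma rank_witness M X : set0 \in M ->
  exists2 Y, (Y \in M) && (Y \subset X) & #|Y| = rank M X.
Proof.
move=> M0; have P0 : (set0 \in M) && (set0 \subset X) by rewrite M0 sub0set.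
by rewrite /rank (bigmax_eq_arg set0 P0); case: arg_maxnP => // Y; exists Y.
Qed.

Lemma rank_mono M N X : M \subset N -> rank M X <= rank N X.
Proof.
move=> sMN; apply/bigmax_leqP=> Y /andP[YM sYX].
exact: card_leq_rank (subsetP sMN Y YM) sYX.
Qed.

Lemma indep_rankE M X : set0 \in M -> (X \in M) = (rank M X == #|X|).
Proof.
move=> M0; apply/idP/eqP=> [XM|rX].
  by apply/eqP; rewrite eqn_leq rank_leq_card card_leq_rank.
have [Y /andP[YM sYX] cY] := rank_witness X M0.
suff -> : X = Y by [].
by apply/eqP; rewrite eq_sym eqEcard sYX cY rX /=.
Qed.

Definition trunc k N : {set {set T}} := [set Y in N | #|Y| <= k].

Lemma trunc_subset k N : trunc k N \subset N.
Proof. by apply/subsetP=> Y; rewrite inE => /andP[]. Qed.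

Lemma trunc_trunc k l N : trunc k (trunc l N) = trunc (minn k l) N.
Proof. by apply/setP=> Y; rewrite !inE leq_min andbAC -andbA. Qed.

Lemma subset_trunc_rank M N :
  M \subset N -> M \subset trunc (rank M [set: T]) N.
Proof.
move=> sMN; apply/subsetP=> Y YM.
by rewrite inE (subsetP sMN Y YM) card_leq_rank ?subsetT.
Qed.

Lemma trunc_id k N : rank N [set: T] <= k -> trunc k N = N.
Proof.
move=> rNk; apply/setP=> Y; rewrite inE andb_idr // => YN.
exact: leq_trans (card_leq_rank YN (subsetT Y)) rNk.
Qed.

Lemma trunc_matroid k N : is_matroid N -> is_matroid (trunc k N).
Proof.
case=> N0 down aug; split.
- by rewrite inE N0 cards0.
- move=> A B; rewrite !inE => /andP[BN cB] sAB.
  by rewrite (down _ _ BN sAB) (leq_trans (subset_leq_card sAB)).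
- move=> A B; rewrite !inE => /andP[AN cA] /andP[BN cB] ltAB.
  have [x xBA xAN] := aug _ _ AN BN ltAB; exists x => //.
  move: xBA; rewrite inE => /andP[xA _].
  by rewrite inE xAN cardsU1 xA /=; lia.
Qed.

Lemma rank_trunc k N X : is_matroid N -> rank (trunc k N) X = minn (rank N X) k.
Proof.
case=> N0 down _; apply/eqP; rewrite eqn_leq; apply/andP; split.
  apply/bigmax_leqP=> Y /andP[]; rewrite inE => /andP[YN cY] sYX.
  by rewrite leq_min cY card_leq_rank.
have [Y /andP[YN sYX] cY] := rank_witness X N0.
have [|Z sZY cZ] := @subset_of_card (minn (rank N X) k) Y.
  by rewrite cY geq_minl.
rewrite -cZ card_leq_rank ?(subset_trans sZY sYX) //.
by rewrite inE (down _ _ YN sZY) cZ geq_minr.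
Qed.

Lemma truncation_of_trunc k N : is_matroid N -> k < rank N [set: T] ->
  truncation_of (trunc k N) (trunc k.+1 N).
Proof.
move=> mN ltk; rewrite /truncation_of !rank_trunc //.
by split=> [|X]; rewrite ?rank_trunc //; lia.
Qed.

Lemma truncation_ofE M N : is_matroid M -> is_matroid N -> truncation_of M N ->
  M = trunc (rank M [set: T]) N.
Proof.
move=> [M0 _ _] [N0 _ _] [_ rM]; apply/setP=> X; rewrite inE.
rewrite (indep_rankE _ M0) (indep_rankE _ N0) rM.
have := rank_leq_card N X; lia.
Qed.

Lemma erection_trunc_succ k M N : is_matroid N -> trunc k N = M ->
  k < rank N [set: T] -> erection M (trunc k.+1 N).
Proof.
move=> mN <- ltk; split; first exact: trunc_matroid.
by left; apply: truncation_of_trunc.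
Qed.

Lemma circuit_trunc k N C : circuit (trunc k N) C -> #|C| <= k -> circuit N C.
Proof.
case/andP=> CtN /forallP minC cC; apply/andP; split.
  by apply: contra CtN => CN; rewrite inE CN cC.
apply/forallP=> D; apply/implyP=> /(implyP (minC D)).
exact: (subsetP (trunc_subset k N)).
Qed.

Lemma card_circuit M C : set0 \in M -> circuit M C -> #|C| <= (rank M C).+1.
Proof.
move=> M0 /andP[CM /forallP minC].
have [x xC] : exists x, x \in C.
  by apply/set0Pn; apply: contraNneq CM => ->.
have CxM : C :\ x \in M by apply: (implyP (minC _)); rewrite properD1.
by have := card_leq_rank CxM (subsetDl C [set x]); rewrite (cardsD1 x C) xC.
Qed.

Lemma dependent_circuit M X :
  X \notin M -> exists2 C : {set T}, C \subset X & circuit M C.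
Proof.
move=> XM.
have [C /minsetP[CM minC] sCX] := @minset_exists _ (fun D => D \notin M) X XM.
exists C => //; apply/andP; split=> //; apply/forallP=> D; apply/implyP=> ltDC.
apply: contraT => DM; have eDC := minC D DM (proper_sub ltDC).
by rewrite eDC properxx in ltDC.
Qed.

Lemma trunc_CC_matroid M N : set0 \in M ->
  CC_matroid (nonspanning_circuits M) N -> M \subset N ->
  trunc (rank M [set: T]) N = M.
Proof.
move=> M0 [[_ downN _] circN] sMN.
apply/eqP; rewrite eqEsubset subset_trunc_rank // andbT.
apply/subsetP=> X; rewrite inE => /andP[XN cX]; apply: contraT => XM.
have [C sCX cC] := dependent_circuit XM.
have rC : rank M C < #|C|.
  move: (cC) => /andP[CM _]; rewrite (indep_rankE _ M0) in CM.
  by rewrite ltn_neqAle CM rank_leq_card.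
have /circN/andP[CN _] : C \in nonspanning_circuits M.
  by rewrite inE cC (leq_trans rC (leq_trans (subset_leq_card sCX) cX)).
by rewrite (downN _ _ XN sCX) in CN.
Qed.

Lemma free_elevation_matroid M FE : free_elevation M FE -> is_matroid FE.
Proof. by elim. Qed.

Lemma trunc_free_elevation M FE : is_matroid M -> free_elevation M FE ->
  trunc (rank M [set: T]) FE = M.
Proof.
move=> + fe; elim: fe => {M FE} [M _ _ _|M M1 FE [[mM1 [tr|//]] _] _ _ IH mM].
  exact: trunc_id.
rewrite {2}(truncation_ofE mM mM1 tr) -(IH mM1) trunc_trunc; case: tr => -> _.
by rewrite (minn_idPl (leqnSn _)).
Qed.

Lemma free_elevation_maximal M FE N : is_matroid M -> free_elevation M FE ->
  is_matroid N -> FE \subset N -> trunc (rank M [set: T]) N = M -> N = FE.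
Proof.
move=> + fe; elim: fe N => {M FE}
  [M _ noerM|M M1 FE [[mM1 [tr|//]] maxM1] _ fe IH] N mM mN sFEN tN.
  have [rN|ltr] := leqP (rank N [set: T]) (rank M [set: T]).
    by rewrite -tN trunc_id.
  have [] := truncation_of_trunc mN ltr.
  by rewrite (noerM _ (erection_trunc_succ mN tN ltr)) tN => /n_Sn.
apply: (IH N mM1 mN sFEN); have [rM1 _] := tr; rewrite rM1.
have sM1N : M1 \subset N.
  rewrite -(trunc_free_elevation mM1 fe).
  exact: subset_trans (trunc_subset _ _) sFEN.
have ltr : rank M [set: T] < rank N [set: T] by rewrite -rM1 rank_mono.
apply/eqP; rewrite eqEsubset; apply/andP; split.
  exact: maxM1 (erection_trunc_succ mN tN ltr).
by rewrite -rM1 subset_trunc_rank.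
Qed.

End Elevation.

Theorem lemma3p1 (T : finType) (M0 FE : {set {set T}}) :
  is_matroid M0 ->
  free_elevation M0 FE ->
  CC_matroid (nonspanning_circuits M0) FE /\
  (forall N : {set {set T}}, CC_matroid (nonspanning_circuits M0) N ->
     weak_le FE N -> N = FE).
Proof.
move=> mM0 fe; have tFE := trunc_free_elevation mM0 fe.
have [set0M0 _ _] := mM0.
split.
  split=> [|C]; first exact: free_elevation_matroid fe.
  rewrite inE => /andP[cC ltC]; apply: (circuit_trunc (k := rank M0 [set: T])).
    by rewrite tFE.
  by have := card_circuit set0M0 cC; lia.
move=> N CN sFEN; have [mN _] := CN.
apply: (free_elevation_maximal mM0 fe mN sFEN).
apply: trunc_CC_matroid => //.
by rewrite -{1}tFE (subset_trans (trunc_subset _ _) sFEN).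
Qed.
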